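(* Let $\{T^k\}_k$ be a nested sequence of trees satisfying the standing assumptions. The big bang condition holds if and only if there exists a nested sequence of trees $\tilde T^k$, with $\tilde T^k$ a restriction of $T^k$ for each $k$, such that $|\partial\tilde T^k|\to\infty$ and $\{\tilde T^k\}_k$ has vanishing spread.
   Context: Trees $T=(V,E,\rho,\ell)$ are finite rooted trees with positive edge lengths, viewed as metric objects; $\partial T$ is the leaf set and $\ell_\gamma$ the distance from the root to point $\gamma$. Restriction of $T$ to $L\subseteq\partial T$: the tree rooted at $\rho$ consisting of all points on paths from $\rho$ to leaves in $L$. Standing assumptions: $\{T^k\}_{k\ge1}$ nested with common root ($T^{k-1}$ is a restriction of $T^k$), $|\partial T^k|=k$, and uniformly bounded height $\sup_k\max_{x\in\partial T^k}\ell_x<\infty$. A sequence $\{\tilde T^k\}$ is nested if $\tilde T^{k-1}$ is a restriction of $\tilde T^k$. Truncation: $T(s)=\{\gamma:\ell_\gamma\le s\}$ with leaf set $\partial T(s)$. Big bang condition: for every $s>0$, $|\partial T^k(s)|\to\infty$ as $k\to\infty$. Spread: for leaves $x,y$, $\ell_{xy}$ is the length of the common part of the paths from $\rho$ to $x$ and to $y$; $\mathrm{Spr}(T)=\frac{\sum_{x\ne y}(\ell_{xy}\wedge1)}{|\partial T|(|\partial T|-1)}$, the sum over ordered pairs of distinct leaves. $\{T^k\}$ has vanishing spread if $\limsup_k\mathrm{Spr}(T^k)=0$. *)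

From Stdlib Require Import Reals List Arith ClassicalEpsilon.
Import ListNotations.
Open Scope R_scope.

(* A finite rooted metric tree T = (V,E,rho,l) spanned by its root and its
   leaves is determined, up to root-preserving isometry, by its leaf set and
   the matrix of "common lengths" l_{xy} (length of the common part of the
   paths from rho to x and to y); l_{xx} = l_x is the height of leaf x.
   Leaves carry labels in nat so that restrictions share leaves with the
   tree they are restricted from. *)
Record tree := mkTree {
  leaves : list nat;
  ov : nat -> nat -> R
}.

Definition ht (T : tree) (x : nat) : R := ov T x x.

(* Axioms of a tree metric seen from the root (Gromov products w.r.t. rho):
   these characterize finite rooted metric trees with positive edge lengths
   spanned by the root and the leaves. *)
Definition wf_tree (T : tree) : Prop :=
  NoDup (leaves T) /\
  (forall x y, In x (leaves T) -> In y (leaves T) -> ov T x y = ov T y x) /\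
  (forall x y, In x (leaves T) -> In y (leaves T) -> 0 <= ov T x y) /\
  (forall x y, In x (leaves T) -> In y (leaves T) -> ov T x y <= ht T x) /\
  (* a leaf is not on the path from the root to another leaf *)
  (forall x y, In x (leaves T) -> In y (leaves T) -> x <> y -> ov T x y < ht T x) /\
  (* four-point (tree) condition relative to the root *)
  (forall x y z, In x (leaves T) -> In y (leaves T) -> In z (leaves T) ->
     Rmin (ov T x y) (ov T y z) <= ov T x z).

Definition is_restriction (S T : tree) : Prop :=
  incl (leaves S) (leaves T) /\
  (forall x y, In x (leaves S) -> In y (leaves S) -> ov S x y = ov T x y).

(* Points of T: a point is given by a leaf x and a height t in [0, l_x]
   (the point at distance t from rho on the path to x). *)
Definition same_point (T : tree) (x : nat) (a : R) (y : nat) (b : R) : Prop :=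
  a = b /\ (x = y \/ a <= ov T x y).

(* The leaves of the truncation T(s) = {gamma : l_gamma <= s} are the points
   at height min(s, l_x) on the paths to the leaves x of T. *)
Definition same_trunc_leaf (T : tree) (s : R) (x y : nat) : Prop :=
  same_point T x (Rmin s (ht T x)) y (Rmin s (ht T y)).

Fixpoint count_classes (P : nat -> nat -> Prop) (l : list nat) : nat :=
  match l with
  | [] => 0%nat
  | x :: l' =>
      ((if excluded_middle_informative (Exists (P x) l') then 0 else 1)
       + count_classes P l')%nat
  end.

Definition n_trunc_leaves (T : tree) (s : R) : nat :=
  count_classes (same_trunc_leaf T s) (leaves T).

Definition big_bang (T : nat -> tree) : Prop :=
  forall s, 0 < s -> forall N : nat, exists K : nat, forall k : nat,
    (K <= k)%nat -> (N <= n_trunc_leaves (T k) s)%nat.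

Definition spread_sum (T : tree) : R :=
  fold_right Rplus 0
    (map (fun x => fold_right Rplus 0
       (map (fun y => if Nat.eq_dec x y then 0 else Rmin (ov T x y) 1)
            (leaves T)))
       (leaves T)).

Definition Spr (T : tree) : R :=
  spread_sum T / (INR (length (leaves T)) * (INR (length (leaves T)) - 1)).

(* limsup_k Spr(T^k) = 0; since Spr >= 0 this is: for all eps > 0,
   eventually Spr(T^k) <= eps. *)
Definition vanishing_spread (T : nat -> tree) : Prop :=
  forall eps, 0 < eps -> exists K : nat, forall k : nat,
    (K <= k)%nat -> Spr (T k) <= eps.

Definition tends_to_infty (u : nat -> nat) : Prop :=
  forall N : nat, exists K : nat, forall k : nat, (K <= k)%nat -> (N <= u k)%nat.

From Stdlib Require Import Reals List Arith Lia Lra ClassicalEpsilon.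
Import ListNotations.
Open Scope R_scope.

(* Two distinct leaves of T give the same leaf of the truncation T(s) exactly
   when their paths from the root have a common part of length at least s.

   Under the big bang condition, choose leaves greedily: at stage k add a leaf
   of T^k whose common length with each of the n leaves chosen so far is below
   1/(n+1); such a leaf exists as soon as T^k(1/(n+1)) has more than n leaves.
   Each added leaf raises the spread sum by at most 2, so n chosen leaves have
   spread at most 2/(n-1).

   Conversely, if |∂T^k(s)| <= N, by pigeonhole at least |∂T~^k|/N leaves of a
   restriction T~^k lie above a single leaf of T^k(s).  Their pairwise common
   lengths are at least s, which keeps Spr(T~^k) above min(s,1)/(2N^2) once
   |∂T~^k| >= 2N. *)

Lemma count_classes_avoid (P : nat -> nat -> Prop) (D : list nat)
  (Psym : forall x y, In x D -> In y D -> P x y -> P y x)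
  (Ptrans : forall x y z, In x D -> In y D -> In z D -> P x y -> P y z -> P x z) :
  forall l B, incl l D -> incl B D -> (length B < count_classes P l)%nat ->
  exists x, In x l /\ forall b, In b B -> ~ P x b.
Proof.
  induction l as [|x l IH]; intros B HlD HBD Hlt; simpl in Hlt; [lia|].
  assert (HxD : In x D) by (apply HlD; left; reflexivity).
  assert (HlD' : incl l D) by (intros z Hz; apply HlD; right; exact Hz).
  destruct (excluded_middle_informative (Exists (P x) l)) as [Hlater|Hnolater].
  - destruct (IH B HlD' HBD Hlt) as [x' [Hx' Hx'B]].
    exists x'; split; [right|]; assumption.
  - destruct (excluded_middle_informative (exists b, In b B /\ P x b))
      as [[b0 [Hb0 Pxb0]]|HxB].
    + (* no element of l is related to b0: it would then be related to x *)
      destruct (IH (remove Nat.eq_dec b0 B)) as [x' [Hx' Hx'B]].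
      * exact HlD'.
      * intros z Hz; apply HBD; eapply in_remove; eauto.
      * pose proof (remove_length_lt Nat.eq_dec B b0 Hb0); lia.
      * exists x'; split; [right; exact Hx'|]. intros b Hb Px'b.
        destruct (Nat.eq_dec b b0) as [->|Hbb0].
        -- apply Hnolater, Exists_exists. exists x'; split; [exact Hx'|].
           apply Ptrans with b0; auto.
        -- apply (Hx'B b); [apply in_in_remove|]; assumption.
    + exists x; split; [left; reflexivity|]. intros b Hb Pxb; eauto.
Qed.

Lemma count_classes_cover (P : nat -> nat -> Prop) (D : list nat)
  (Prefl : forall x, In x D -> P x x)
  (Ptrans : forall x y z, In x D -> In y D -> In z D -> P x y -> P y z -> P x z) :
  forall l, incl l D -> exists R, length R = count_classes P l /\ incl R l /\
    forall x, In x l -> exists r, In r R /\ P x r.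
Proof.
  induction l as [|x l IH]; intros HlD.
  - exists []; repeat split; [intros z []|intros z []].
  - assert (HxD : In x D) by (apply HlD; left; reflexivity).
    assert (HlD' : incl l D) by (intros z Hz; apply HlD; right; exact Hz).
    destruct (IH HlD') as [R [HRlen [HRl HRcov]]]. simpl.
    destruct (excluded_middle_informative (Exists (P x) l)) as [Hlater|Hnolater].
    + exists R; repeat split; [assumption|intros z Hz; right; auto|].
      intros z [<-|Hz]; [|auto].
      apply Exists_exists in Hlater. destruct Hlater as [y [Hy Pxy]].
      destruct (HRcov y Hy) as [r [Hr Pyr]].
      exists r; split; [exact Hr|]. apply Ptrans with y; auto.
    + exists (x :: R); repeat split; [simpl; lia| |].
      * intros z [<-|Hz]; [left|right]; auto.
      * intros z [<-|Hz].
        -- exists x; split; [left|apply Prefl]; auto.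
        -- destruct (HRcov z Hz) as [r [Hr Pzr]]. exists r; split; [right|]; auto.
Qed.

Lemma length_filter_filter_le {A : Type} (p q : A -> bool) (l : list A) :
  (length (filter p (filter q l)) <= length (filter p l))%nat.
Proof.
  induction l as [|x l IH]; simpl; [lia|].
  destruct (q x); simpl; destruct (p x); simpl; lia.
Qed.

Lemma pigeonhole_filter {A B : Type} (p : A -> B -> bool) (R : list B) :
  forall L : list A, L <> [] -> (forall x, In x L -> exists r, In r R /\ p x r = true) ->
  exists r, In r R /\ (length L <= length R * length (filter (fun x => p x r) L))%nat.
Proof.
  induction R as [|a R IH]; intros L HL Hcov.
  - destruct L as [|x L]; [congruence|].
    destruct (Hcov x (or_introl eq_refl)) as [r [[] _]].
  - set (La := filter (fun x => p x a) L).
    set (Lrest := filter (fun x => negb (p x a)) L).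
    assert (Hsplit : length L = (length La + length Lrest)%nat)
      by (symmetry; apply filter_length).
    destruct (Nat.eq_dec (length Lrest) 0) as [Hnil|Hnonempty].
    + exists a; split; [left; reflexivity|]. fold La; cbn [length]; nia.
    + destruct (IH Lrest) as [r [Hr Hbound]].
      * intros Hnil; apply Hnonempty; rewrite Hnil; reflexivity.
      * intros x Hx. unfold Lrest in Hx. apply filter_In in Hx as [HxL Hxa].
        destruct (Hcov x HxL) as [r [[<-|Hr] Pxr]].
        -- rewrite Pxr in Hxa; discriminate.
        -- exists r; split; assumption.
      * assert (Hsub : (length (filter (fun x => p x r) Lrest)
                          <= length (filter (fun x => p x r) L))%nat)
          by apply length_filter_filter_le.
        destruct (Nat.le_gt_cases (length La) (length (filter (fun x => p x r) L))).
        -- exists r; split; [right; exact Hr|]. cbn [length]; nia.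
        -- exists a; split; [left; reflexivity|]. fold La; cbn [length]; nia.
Qed.

Section Truncation.
Variable T : tree.
Hypothesis HT : wf_tree T.

Lemma same_trunc_leaf_refl s x : same_trunc_leaf T s x x.
Proof. split; auto. Qed.

Lemma same_trunc_leaf_sym s x y : In x (leaves T) -> In y (leaves T) ->
  same_trunc_leaf T s x y -> same_trunc_leaf T s y x.
Proof.
  destruct HT as [_ [Hsym _]]. intros Hx Hy [Heq [->|Hle]]; split; auto.
  right. rewrite Hsym by assumption. lra.
Qed.

Lemma same_trunc_leaf_trans s x y z :
  In x (leaves T) -> In y (leaves T) -> In z (leaves T) ->
  same_trunc_leaf T s x y -> same_trunc_leaf T s y z -> same_trunc_leaf T s x z.
Proof.
  destruct HT as [_ [_ [_ [_ [_ Hfour]]]]].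
  intros Hx Hy Hz [Exy [->|Hxy]] [Eyz [->|Hyz]]; split; try lra; auto.
  right. pose proof (Hfour x y z Hx Hy Hz).
  assert (Rmin s (ht T x) <= Rmin (ov T x y) (ov T y z)) by (apply Rmin_glb; lra).
  lra.
Qed.

Lemma same_trunc_leaf_ov_ge s x y : In x (leaves T) -> In y (leaves T) -> x <> y ->
  same_trunc_leaf T s x y -> s <= ov T x y.
Proof.
  destruct HT as [_ [_ [_ [_ [Hstrict _]]]]].
  intros Hx Hy Hxy [_ [Heq|Hle]]; [contradiction|].
  pose proof (Hstrict x y Hx Hy Hxy).
  destruct (Rle_dec s (ht T x)).
  - rewrite Rmin_left in Hle by assumption. exact Hle.
  - rewrite Rmin_right in Hle by lra. lra.
Qed.

Lemma not_same_trunc_leaf_ov_lt s x y : In x (leaves T) -> In y (leaves T) ->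
  ~ same_trunc_leaf T s x y -> ov T x y < s.
Proof.
  destruct HT as [_ [Hsym [_ [Hht _]]]]. intros Hx Hy Hnot.
  destruct (Rlt_le_dec (ov T x y) s) as [|Hge]; [assumption|]. exfalso.
  pose proof (Hht x y Hx Hy). pose proof (Hht y x Hy Hx).
  rewrite (Hsym y x) in * by assumption.
  apply Hnot. unfold same_trunc_leaf, same_point.
  rewrite (Rmin_left s (ht T x)), (Rmin_left s (ht T y)) by lra.
  split; [reflexivity|right; exact Hge].
Qed.

End Truncation.

Definition rsum (l : list nat) (g : nat -> R) : R := fold_right Rplus 0 (map g l).

Lemma rsum_cons a l g : rsum (a :: l) g = g a + rsum l g.
Proof. reflexivity. Qed.

Lemma rsum_plus l g h : rsum l (fun x => g x + h x) = rsum l g + rsum l h.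
Proof. induction l as [|a l IH]; rewrite ?rsum_cons, ?IH; unfold rsum; simpl; lra. Qed.

Lemma rsum_le l g h : (forall x, In x l -> g x <= h x) -> rsum l g <= rsum l h.
Proof.
  induction l as [|a l IH]; intros Hgh; [unfold rsum; simpl; lra|].
  rewrite !rsum_cons. apply Rplus_le_compat.
  - apply Hgh; left; reflexivity.
  - apply IH; intros x Hx; apply Hgh; right; exact Hx.
Qed.

Lemma rsum_le_const l g c : (forall x, In x l -> g x <= c) -> rsum l g <= INR (length l) * c.
Proof.
  induction l as [|a l IH]; intros Hg; [unfold rsum; simpl; lra|].
  rewrite rsum_cons. cbn [length]. rewrite S_INR.
  assert (g a <= c) by (apply Hg; left; reflexivity).
  assert (rsum l g <= INR (length l) * c) by (apply IH; intros x Hx; apply Hg; right; exact Hx).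
  lra.
Qed.

Lemma rsum_ge_const l g c : (forall x, In x l -> c <= g x) -> INR (length l) * c <= rsum l g.
Proof.
  induction l as [|a l IH]; intros Hg; [unfold rsum; simpl; lra|].
  rewrite rsum_cons. cbn [length]. rewrite S_INR.
  assert (c <= g a) by (apply Hg; left; reflexivity).
  assert (INR (length l) * c <= rsum l g) by (apply IH; intros x Hx; apply Hg; right; exact Hx).
  lra.
Qed.

Lemma rsum_filter_le l g p : (forall x, In x l -> 0 <= g x) -> rsum (filter p l) g <= rsum l g.
Proof.
  induction l as [|a l IH]; intros Hg; [unfold rsum; simpl; lra|].
  assert (0 <= g a) by (apply Hg; left; reflexivity).
  assert (rsum (filter p l) g <= rsum l g) by (apply IH; intros x Hx; apply Hg; right; exact Hx).
  simpl filter. destruct (p a); rewrite ?rsum_cons; lra.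
Qed.

Lemma rsum_ge_const_but_one l g x d : NoDup l -> In x l -> 0 <= g x ->
  (forall y, In y l -> y <> x -> d <= g y) -> (INR (length l) - 1) * d <= rsum l g.
Proof.
  induction l as [|a l IH]; intros Hnd Hx Hgx Hg; [destruct Hx|].
  inversion Hnd as [|? ? Ha Hnd']; subst.
  rewrite rsum_cons. cbn [length]. rewrite S_INR.
  destruct (Nat.eq_dec a x) as [->|Hax].
  - assert (INR (length l) * d <= rsum l g).
    { apply rsum_ge_const. intros y Hy. apply Hg; [right; exact Hy|].
      intros ->; contradiction. }
    lra.
  - destruct Hx as [->|Hx]; [contradiction|].
    assert ((INR (length l) - 1) * d <= rsum l g).
    { apply IH; auto. intros y Hy Hyx; apply Hg; [right|]; assumption. }
    assert (d <= g a) by (apply Hg; [left; reflexivity|exact Hax]).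
    lra.
Qed.

Definition spread_term (f : nat -> nat -> R) (x y : nat) : R :=
  if Nat.eq_dec x y then 0 else Rmin (f x y) 1.

Lemma spread_sum_rsum (U : tree) :
  spread_sum U = rsum (leaves U) (fun x => rsum (leaves U) (spread_term (ov U) x)).
Proof. reflexivity. Qed.

Lemma spread_term_nonneg f x y : 0 <= f x y -> 0 <= spread_term f x y.
Proof.
  unfold spread_term; destruct Nat.eq_dec; [lra|]. intros; apply Rmin_glb; lra.
Qed.

(* A leaf added to [n] leaves with common lengths below [1/(n+1)] adds at
   most [2] to the spread sum. *)
Fixpoint sparse (f : nat -> nat -> R) (l : list nat) : Prop :=
  match l with
  | [] => True
  | a :: l' => sparse f l' /\ forall y, In y l' -> f a y < / INR (S (length l'))
  end.

Lemma sparse_ext f g l : (forall x y, In x l -> In y l -> f x y = g x y) ->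
  sparse f l -> sparse g l.
Proof.
  induction l as [|a l IH]; simpl; [auto|]. intros Hfg [Hl Ha]. split.
  - apply IH; [intros x y Hx Hy; apply Hfg; right; assumption|exact Hl].
  - intros y Hy. rewrite <- Hfg by (simpl; auto). apply Ha; exact Hy.
Qed.

Lemma rsum_spread_term_sparse_le f l : NoDup l -> sparse f l ->
  (forall x y, In x l -> In y l -> f x y = f y x) ->
  rsum l (fun x => rsum l (spread_term f x)) <= 2 * INR (length l).
Proof.
  induction l as [|a l IH]; intros Hnd Hsparse Hsym; [unfold rsum; simpl; lra|].
  destruct Hsparse as [Hl Ha]. inversion Hnd as [|? ? Hal Hnd']; subst.
  assert (Hfrac : INR (length l) * / INR (S (length l)) <= 1).
  { rewrite S_INR. pose proof (pos_INR (length l)).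
    apply (Rmult_le_reg_r (INR (length l) + 1)); [lra|].
    rewrite Rmult_assoc, Rinv_l by lra. lra. }
  assert (Hrow : rsum l (spread_term f a) <= 1).
  { eapply Rle_trans; [apply rsum_le_const|exact Hfrac].
    intros y Hy. unfold spread_term. destruct Nat.eq_dec as [->|]; [contradiction|].
    pose proof (Ha y Hy). pose proof (Rmin_l (f a y) 1). lra. }
  assert (Hcol : rsum l (fun x => spread_term f x a) <= 1).
  { eapply Rle_trans; [apply rsum_le_const|exact Hfrac].
    intros y Hy. unfold spread_term. destruct Nat.eq_dec as [->|]; [contradiction|].
    rewrite Hsym by (simpl; auto).
    pose proof (Ha y Hy). pose proof (Rmin_l (f a y) 1). lra. }
  assert (Hrest : rsum l (fun x => rsum l (spread_term f x)) <= 2 * INR (length l)).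
  { apply IH; [exact Hnd'|exact Hl|]. intros x y Hx Hy; apply Hsym; right; assumption. }
  assert (Hdiag : spread_term f a a = 0)
    by (unfold spread_term; destruct Nat.eq_dec; [reflexivity|contradiction]).
  assert (Hcols : rsum l (fun x => rsum (a :: l) (spread_term f x))
                  = rsum l (fun x => spread_term f x a) + rsum l (fun x => rsum l (spread_term f x)))
    by (rewrite <- rsum_plus; reflexivity).
  rewrite rsum_cons, Hcols, rsum_cons. cbn [length]. rewrite S_INR. lra.
Qed.

Lemma Spr_le_of_sparse (U : tree) : NoDup (leaves U) ->
  (forall x y, In x (leaves U) -> In y (leaves U) -> ov U x y = ov U y x) ->
  sparse (ov U) (leaves U) -> (2 <= length (leaves U))%nat ->
  Spr U <= 2 / (INR (length (leaves U)) - 1).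
Proof.
  intros Hnd Hsym Hsparse Hn.
  pose proof (rsum_spread_term_sparse_le _ _ Hnd Hsparse Hsym) as Hsum.
  rewrite <- spread_sum_rsum in Hsum.
  apply le_INR in Hn. replace (INR 2) with 2 in Hn by (simpl; lra).
  unfold Spr. set (n := INR (length (leaves U))) in *.
  apply Rle_trans with (2 * n / (n * (n - 1))).
  - unfold Rdiv. apply Rmult_le_compat_r; [|exact Hsum].
    left; apply Rinv_0_lt_compat; nra.
  - right; field; lra.
Qed.

Lemma spread_sum_ge_cluster (U : tree) (q : nat -> bool) (d : R) :
  NoDup (leaves U) ->
  (forall x y, In x (leaves U) -> In y (leaves U) -> 0 <= ov U x y) -> d <= 1 ->
  (forall x y, In x (filter q (leaves U)) -> In y (filter q (leaves U)) -> x <> y ->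
     d <= ov U x y) ->
  INR (length (filter q (leaves U))) * ((INR (length (filter q (leaves U))) - 1) * d)
    <= spread_sum U.
Proof.
  intros Hnd Hnonneg Hd1 Hcluster.
  set (C := filter q (leaves U)) in *.
  assert (HCL : incl C (leaves U)) by apply incl_filter.
  assert (Hterm : forall x y, In x (leaves U) -> In y (leaves U) -> 0 <= spread_term (ov U) x y)
    by (intros; apply spread_term_nonneg, Hnonneg; assumption).
  rewrite spread_sum_rsum.
  apply Rle_trans with (rsum C (fun x => rsum C (spread_term (ov U) x))).
  { apply rsum_ge_const. intros x Hx.
    apply rsum_ge_const_but_one with x; [apply NoDup_filter, Hnd|exact Hx| |].
    - unfold spread_term; destruct Nat.eq_dec; [lra|contradiction].
    - intros y Hy Hyx. unfold spread_term.
      destruct Nat.eq_dec as [->|Hxy]; [contradiction|].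
      apply Rmin_glb; [apply Hcluster|]; assumption. }
  apply Rle_trans with (rsum C (fun x => rsum (leaves U) (spread_term (ov U) x))).
  - apply rsum_le. intros x Hx. apply rsum_filter_le. intros y Hy; apply Hterm; auto.
  - apply rsum_filter_le. intros x Hx.
    rewrite <- (Rmult_0_r (INR (length (leaves U)))).
    apply rsum_ge_const. intros y Hy; apply Hterm; assumption.
Qed.

Lemma cluster_size_bound (n c N : R) : 1 <= N -> 2 * N <= n -> n <= N * c ->
  n * (n - 1) <= 2 * (N * N) * (c * (c - 1)).
Proof.
  intros HN Hn Hc.
  assert (n * (n - N) <= N * c * (N * c - N)) by (apply Rmult_le_compat; lra).
  nra.
Qed.

Lemma Spr_ge_of_cluster (U : tree) (q : nat -> bool) (d : R) (N : nat) :
  NoDup (leaves U) ->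
  (forall x y, In x (leaves U) -> In y (leaves U) -> 0 <= ov U x y) -> 0 <= d <= 1 ->
  (forall x y, In x (filter q (leaves U)) -> In y (filter q (leaves U)) -> x <> y ->
     d <= ov U x y) ->
  (1 <= N)%nat -> (2 * N <= length (leaves U))%nat ->
  (length (leaves U) <= N * length (filter q (leaves U)))%nat ->
  d / (2 * INR N * INR N) <= Spr U.
Proof.
  intros Hnd Hnonneg Hd Hcluster HN Hn Hc.
  pose proof (spread_sum_ge_cluster U q d Hnd Hnonneg (proj2 Hd) Hcluster) as Hsum.
  apply le_INR in HN, Hn, Hc. rewrite mult_INR in Hn, Hc.
  replace (INR 1) with 1 in HN by reflexivity.
  replace (INR 2) with 2 in Hn by (simpl; lra).
  unfold Spr.
  set (n := INR (length (leaves U))) in *.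
  set (c := INR (length (filter q (leaves U)))) in *.
  set (M := INR N) in *.
  pose proof (cluster_size_bound n c M HN Hn Hc) as Hsize.
  assert (Hnn : 0 < n * (n - 1)) by nra.
  apply Rmult_le_reg_r with (2 * M * M * (n * (n - 1))); [nra|].
  replace (d / (2 * M * M) * (2 * M * M * (n * (n - 1)))) with (d * (n * (n - 1)))
    by (field; lra).
  replace (spread_sum U / (n * (n - 1)) * (2 * M * M * (n * (n - 1))))
    with (2 * M * M * spread_sum U) by (field; lra).
  apply Rle_trans with (2 * M * M * (c * ((c - 1) * d))).
  - replace (2 * M * M * (c * ((c - 1) * d))) with (d * (2 * (M * M) * (c * (c - 1))))
      by ring.
    apply Rmult_le_compat_l; [lra|exact Hsize].
  - apply Rmult_le_compat_l; [nra|exact Hsum].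
Qed.

Lemma trunc_cluster (T U : tree) (s : R) : wf_tree T -> is_restriction U T ->
  leaves U <> [] ->
  exists q : nat -> bool,
    (length (leaves U) <= n_trunc_leaves T s * length (filter q (leaves U)))%nat /\
    forall x y, In x (filter q (leaves U)) -> In y (filter q (leaves U)) -> x <> y ->
      s <= ov U x y.
Proof.
  intros HT [Hincl Hov] Hne.
  set (P := same_trunc_leaf T s).
  set (p := fun x r => if excluded_middle_informative (P x r) then true else false).
  assert (Hp : forall x r, p x r = true <-> P x r)
    by (intros x r; unfold p; destruct excluded_middle_informative; split; easy).
  destruct (count_classes_cover P (leaves T)) with (l := leaves T)
    as [R [HRlen [HRT HRcov]]].
  - intros x _; apply same_trunc_leaf_refl.
  - intros x y z Hx Hy Hz; apply same_trunc_leaf_trans; assumption.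
  - apply incl_refl.
  - destruct (pigeonhole_filter p R (leaves U) Hne) as [r [Hr Hbound]].
    { intros x Hx. destruct (HRcov x (Hincl x Hx)) as [r [Hr Pxr]].
      exists r; split; [exact Hr|apply Hp, Pxr]. }
    exists (fun x => p x r).
    split; [unfold n_trunc_leaves; fold P; rewrite <- HRlen; exact Hbound|].
    intros x y Hx Hy Hxy.
    apply filter_In in Hx as [HxU Pxr%Hp], Hy as [HyU Pyr%Hp].
    rewrite Hov by assumption.
    apply (same_trunc_leaf_ov_ge T HT); auto.
    apply same_trunc_leaf_trans with r; auto.
    apply same_trunc_leaf_sym; auto.
Qed.

Lemma big_bang_of_vanishing_spread (T Tt : nat -> tree) :
  (forall k, (1 <= k)%nat -> wf_tree (T k)) ->
  (forall k, (1 <= k)%nat -> wf_tree (Tt k) /\ is_restriction (Tt k) (T k)) ->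
  tends_to_infty (fun k => length (leaves (Tt k))) -> vanishing_spread Tt ->
  big_bang T.
Proof.
  intros HT HTt Hgrow Hspread s Hs N.
  destruct (Nat.eq_0_gt_0_cases N) as [->|HN]; [exists 0%nat; intros; lia|].
  set (d := Rmin s 1).
  assert (Hd : 0 < d <= s /\ d <= 1)
    by (unfold d; pose proof (Rmin_l s 1); pose proof (Rmin_r s 1);
        pose proof (Rmin_glb_lt s 1 0 Hs Rlt_0_1); lra).
  assert (HM : 1 <= INR N) by (apply (le_INR 1); lia).
  assert (Hlow_pos : 0 < d / (2 * INR N * INR N))
    by (apply Rdiv_lt_0_compat; nra).
  destruct (Hspread (d / (2 * INR N * INR N) / 2)) as [K1 HK1]; [lra|].
  destruct (Hgrow (2 * N)%nat) as [K2 HK2].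
  exists (Nat.max 1 (Nat.max K1 K2)). intros k Hk.
  destruct (le_lt_dec N (n_trunc_leaves (T k) s)) as [|Hfew]; [assumption|exfalso].
  destruct (HTt k ltac:(lia)) as [(Hnd & _ & Hnonneg & _) HU].
  assert (Hn := HK2 k ltac:(lia)).
  destruct (trunc_cluster (T k) (Tt k) s (HT k ltac:(lia)) HU) as [q [Hc Hcluster]].
  { intros Hnil; rewrite Hnil in Hn; simpl in Hn; lia. }
  assert (Hlow : d / (2 * INR N * INR N) <= Spr (Tt k)).
  { apply Spr_ge_of_cluster with q; [exact Hnd|exact Hnonneg|lra| |lia|exact Hn|nia].
    intros x y Hx Hy Hxy. pose proof (Hcluster x y Hx Hy Hxy). lra. }
  specialize (HK1 k ltac:(lia)). lra.
Qed.

Lemma vanishing_spread_of_sparse (Tt : nat -> tree) :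
  (forall k, (1 <= k)%nat -> wf_tree (Tt k) /\ sparse (ov (Tt k)) (leaves (Tt k))) ->
  tends_to_infty (fun k => length (leaves (Tt k))) -> vanishing_spread Tt.
Proof.
  intros HTt Hgrow eps Heps.
  destruct (archimed_cor1 (eps / 2)) as [N [HN HNpos]]; [lra|].
  destruct (Hgrow (N + 2)%nat) as [K HK].
  exists (Nat.max 1 K). intros k Hk.
  destruct (HTt k ltac:(lia)) as [(Hnd & Hsym & _) Hsparse].
  assert (Hn := HK k ltac:(lia)).
  eapply Rle_trans; [apply Spr_le_of_sparse; auto; lia|].
  apply le_INR in Hn. rewrite plus_INR in Hn. replace (INR 2) with 2 in Hn by (simpl; lra).
  assert (1 <= INR N) by (apply (le_INR 1); lia).
  apply Rle_trans with (2 * / INR N); [|lra].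
  apply Rmult_le_compat_l; [lra|]. apply Rinv_le_contravar; lra.
Qed.

Definition restrict (U : tree) (l : list nat) : tree := mkTree l (ov U).

Lemma wf_tree_restrict U l : wf_tree U -> NoDup l -> incl l (leaves U) ->
  wf_tree (restrict U l).
Proof.
  intros (_ & Hsym & Hnonneg & Hht & Hstrict & Hfour) Hnd Hincl.
  repeat split; simpl; intros; auto.
Qed.

Lemma is_restriction_restrict U l : incl l (leaves U) -> is_restriction (restrict U l) U.
Proof. split; [assumption|reflexivity]. Qed.

Definition greedy_candidate (U : tree) (l : list nat) (a : nat) : Prop :=
  In a (leaves U) /\ forall y, In y l -> a <> y /\ ov U a y < / INR (S (length l)).

Definition greedy_step (U : tree) (l : list nat) : list nat :=
  match excluded_middle_informative (exists a, greedy_candidate U l a) with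
  | left H => proj1_sig (constructive_indefinite_description _ H) :: l
  | right _ => l
  end.

Fixpoint greedy_leaves (T : nat -> tree) (k : nat) : list nat :=
  match k with
  | O => []
  | S k' => greedy_step (T (S k')) (greedy_leaves T k')
  end.

Lemma greedy_step_cases U l :
  greedy_step U l = l \/ exists a, greedy_candidate U l a /\ greedy_step U l = a :: l.
Proof.
  unfold greedy_step. destruct excluded_middle_informative as [H|_]; [right|left; reflexivity].
  destruct (constructive_indefinite_description _ H) as [a Ha]. eauto.
Qed.

Lemma greedy_step_length U l : (exists a, greedy_candidate U l a) ->
  length (greedy_step U l) = S (length l).
Proof.
  intros H. unfold greedy_step.
  destruct excluded_middle_informative; [reflexivity|contradiction].
Qed.

Section Greedy.
Variable T : nat -> tree.
Hypothesis Hwf : forall k, (1 <= k)%nat -> wf_tree (T k).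
Hypothesis Hnest : forall k, (2 <= k)%nat -> is_restriction (T (k - 1)%nat) (T k).

Lemma restriction_succ k : (1 <= k)%nat -> is_restriction (T k) (T (S k)).
Proof.
  intros Hk. replace k with (S k - 1)%nat at 1 by lia. apply Hnest. lia.
Qed.

Lemma greedy_leaves_spec k : incl (greedy_leaves T k) (leaves (T k)) /\
  NoDup (greedy_leaves T k) /\ sparse (ov (T k)) (greedy_leaves T k).
Proof.
  induction k as [|k [Hincl [Hnd Hsparse]]].
  - repeat split; [intros z []|constructor].
  - assert (Hprev : incl (greedy_leaves T k) (leaves (T (S k))) /\
                    sparse (ov (T (S k))) (greedy_leaves T k)).
    { destruct k as [|k]; [split; [intros z []|exact I]|].
      destruct (restriction_succ (S k)) as [Hi Hov]; [lia|].
      split; [intros z Hz; apply Hi, Hincl, Hz|].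
      apply sparse_ext with (ov (T (S k))); [|exact Hsparse].
      intros x y Hx Hy; apply Hov; auto. }
    destruct Hprev as [Hincl' Hsparse'].
    cbn [greedy_leaves].
    destruct (greedy_step_cases (T (S k)) (greedy_leaves T k)) as [->|[a [[Ha Hfar] ->]]].
    + repeat split; assumption.
    + repeat split.
      * intros z [<-|Hz]; auto.
      * constructor; [|exact Hnd]. intros Hin. destruct (Hfar a Hin); contradiction.
      * exact Hsparse'.
      * intros y Hy; apply Hfar, Hy.
Qed.

Lemma greedy_leaves_incl_succ k : incl (greedy_leaves T k) (greedy_leaves T (S k)).
Proof.
  cbn [greedy_leaves].
  destruct (greedy_step_cases (T (S k)) (greedy_leaves T k)) as [->|[a [_ ->]]].
  - apply incl_refl.
  - apply incl_tl, incl_refl.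
Qed.

Lemma greedy_leaves_length_mono k k' : (k <= k')%nat ->
  (length (greedy_leaves T k) <= length (greedy_leaves T k'))%nat.
Proof.
  induction 1 as [|k' _ IH]; [lia|].
  cbn [greedy_leaves].
  destruct (greedy_step_cases (T (S k')) (greedy_leaves T k')) as [->|[a [_ ->]]];
    simpl; lia.
Qed.

Lemma greedy_leaves_grow m n : (1 <= m)%nat -> (length (greedy_leaves T m) <= n)%nat ->
  (n < n_trunc_leaves (T (S m)) (/ INR (S n)))%nat ->
  length (greedy_leaves T (S m)) = S (length (greedy_leaves T m)).
Proof.
  intros Hm Hlen Hcount.
  set (l := greedy_leaves T m) in *.
  set (U := T (S m)) in *.
  assert (HU : wf_tree U) by (apply Hwf; lia).
  assert (HlU : incl l (leaves U)).
  { destruct (restriction_succ m Hm) as [Hi _].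
    intros z Hz; apply Hi, (proj1 (greedy_leaves_spec m)), Hz. }
  destruct (count_classes_avoid (same_trunc_leaf U (/ INR (S n))) (leaves U))
    with (l := leaves U) (B := l) as [x [Hx Hfar]].
  - intros; apply same_trunc_leaf_sym; assumption.
  - intros x y z Hx Hy Hz; apply same_trunc_leaf_trans; assumption.
  - apply incl_refl.
  - exact HlU.
  - unfold n_trunc_leaves in Hcount. lia.
  - apply greedy_step_length. exists x. split; [exact Hx|]. intros y Hy. split.
    + intros ->. apply (Hfar y Hy), same_trunc_leaf_refl.
    + eapply Rlt_le_trans; [apply not_same_trunc_leaf_ov_lt; auto|].
      apply Rinv_le_contravar; [apply lt_0_INR; lia|apply le_INR; lia].
Qed.

Hypothesis Hbb : big_bang T.

Lemma greedy_leaves_tends_to_infty : tends_to_infty (fun k => length (greedy_leaves T k)).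
Proof.
  assert (Hunbounded : forall n, exists k, (n <= length (greedy_leaves T k))%nat).
  { induction n as [|n [k Hk]]; [exists 0%nat; lia|].
    destruct (Hbb (/ INR (S n))) with (N := S n) as [K HK].
    { apply Rinv_0_lt_compat, lt_0_INR; lia. }
    set (m := Nat.max 1 (Nat.max K k)).
    pose proof (greedy_leaves_length_mono k m ltac:(lia)).
    destruct (le_lt_dec (S n) (length (greedy_leaves T m))) as [|Hsmall];
      [exists m; assumption|].
    exists (S m). rewrite (greedy_leaves_grow m n); [lia|lia|lia|apply HK; lia]. }
  intros N. destruct (Hunbounded N) as [K HK]. exists K. intros k Hk.
  pose proof (greedy_leaves_length_mono K k Hk). lia.
Qed.

Lemma exists_vanishing_spread_restrictions :
  exists Tt : nat -> tree,
    (forall k, (1 <= k)%nat -> wf_tree (Tt k) /\ is_restriction (Tt k) (T k)) /\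
    (forall k, (2 <= k)%nat -> is_restriction (Tt (k - 1)%nat) (Tt k)) /\
    tends_to_infty (fun k => length (leaves (Tt k))) /\
    vanishing_spread Tt.
Proof.
  set (Tt := fun k => restrict (T k) (greedy_leaves T k)).
  assert (HTt : forall k, (1 <= k)%nat -> wf_tree (Tt k) /\ is_restriction (Tt k) (T k)).
  { intros k Hk. destruct (greedy_leaves_spec k) as [Hincl [Hnd _]].
    split; [apply wf_tree_restrict; auto|apply is_restriction_restrict, Hincl]. }
  exists Tt. split; [exact HTt|split; [|split]].
  - intros k Hk. destruct k as [|j]; [lia|]. replace (S j - 1)%nat with j by lia.
    split; [apply greedy_leaves_incl_succ|].
    intros x y Hx Hy. apply (restriction_succ j ltac:(lia));
      apply (proj1 (greedy_leaves_spec j)); assumption.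
  - exact greedy_leaves_tends_to_infty.
  - apply vanishing_spread_of_sparse; [|exact greedy_leaves_tends_to_infty].
    intros k Hk. split; [apply HTt, Hk|apply (greedy_leaves_spec k)].
Qed.

End Greedy.

Theorem mainTheorem3 (T : nat -> tree)
  (Hwf : forall k, (1 <= k)%nat -> wf_tree (T k))
  (Hnest : forall k, (2 <= k)%nat -> is_restriction (T (k - 1)%nat) (T k))
  (Hcard : forall k, (1 <= k)%nat -> length (leaves (T k)) = k)
  (Hbdd : exists H : R, forall k x, (1 <= k)%nat -> In x (leaves (T k)) ->
            ht (T k) x <= H) :
  big_bang T <->
  exists Tt : nat -> tree,
    (forall k, (1 <= k)%nat -> wf_tree (Tt k) /\ is_restriction (Tt k) (T k)) /\
    (forall k, (2 <= k)%nat -> is_restriction (Tt (k - 1)%nat) (Tt k)) /\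
    tends_to_infty (fun k => length (leaves (Tt k))) /\
    vanishing_spread Tt.
Proof.
  split.
  - intros Hbb. exact (exists_vanishing_spread_restrictions T Hwf Hnest Hbb).
  - intros (Tt & HTt & _ & Hgrow & Hspread).
    exact (big_bang_of_vanishing_spread T Tt Hwf HTt Hgrow Hspread).
Qed.
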